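(* Let $0<\eta<1$, set $\gamma_0=0$ and $\gamma_j=(1+\eta\gamma_{j-1}^2)/2$ for $j\ge1$. Then $(\gamma_j)_{j\ge0}$ is an infinite $g$-sequence. Moreover, with $\varepsilon=1-\eta$, the limit $L_\varepsilon=\lim_{j\to\infty}\gamma_j$ exists, $L_\varepsilon=\dfrac{1}{1+\sqrt\varepsilon}$, and for every $j\ge0$, \[ L_\varepsilon-\gamma_j\le L_\varepsilon(1-\sqrt\varepsilon)^j. \]
   Context: An infinite $g$-sequence is a sequence $(\gamma_k)_{k\ge0}$ with $\gamma_0=0$, $\gamma_1=1/2$ and, for every $k\ge1$, $0<\gamma_k<1$ and $\gamma_k<\gamma_{k+1}<(1+\gamma_k^2)/2$. *)

From Stdlib Require Import Reals.
Open Scope R_scope.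

Definition is_g_sequence (g : nat -> R) : Prop :=
  g 0%nat = 0 /\ g 1%nat = 1 / 2 /\
  forall k : nat, (1 <= k)%nat ->
    0 < g k < 1 /\ g k < g (S k) < (1 + g k ^ 2) / 2.

Fixpoint gamma_seq (eta : R) (j : nat) : R :=
  match j with
  | O => 0
  | S j' => (1 + eta * gamma_seq eta j' ^ 2) / 2
  end.

From Stdlib Require Import Reals Lra Lia Psatz.
Open Scope R_scope.

(* Write [eta = 1 - s^2] with [s = sqrt eps]; then [L = 1/(1+s)] is the smaller
   fixed point of [x |-> (1 + eta x^2)/2].  The recursion is increasing on
   [0, L), so the sequence climbs monotonically towards [L], and since
   [L - gamma_(j+1) = eta (L + gamma_j)/2 * (L - gamma_j)] with
   [eta (L + gamma_j)/2 <= eta L = 1 - s], the error contracts by [1 - s]. *)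

Lemma Un_cv_geometric_below (u : nat -> R) (l C q : R) :
  0 < C -> 0 <= q < 1 -> (forall n, 0 <= l - u n <= C * q ^ n) -> Un_cv u l.
Proof.
  intros HC Hq Hu e He.
  assert (Hq1 : Rabs q < 1) by (rewrite Rabs_right; lra).
  destruct (pow_lt_1_zero q Hq1 (e / C)) as [N HN].
  { apply Rdiv_lt_0_compat; lra. }
  exists N; intros n Hn.
  specialize (HN n Hn); specialize (Hu n).
  rewrite Rabs_right in HN by (apply Rle_ge, pow_le; lra).
  assert (HCq : C * q ^ n < e).
  { apply (Rmult_lt_compat_l C) in HN; [|lra].
    replace (C * (e / C)) with e in HN by (field; lra). exact HN. }
  unfold R_dist; rewrite Rabs_left1; lra.
Qed.

Section gamma_seq_convergence.

Variable s : R.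
Hypothesis Hs : 0 < s < 1.

Local Notation g := (gamma_seq (1 - s ^ 2)).
Local Notation L := (1 / (1 + s)).

Lemma gamma_seq_S j : g (S j) = (1 + (1 - s ^ 2) * g j ^ 2) / 2.
Proof. reflexivity. Qed.

Lemma gamma_limit_fixed_point : (1 + (1 - s ^ 2) * L ^ 2) / 2 = L.
Proof. field; lra. Qed.

Lemma gamma_seq_bounds j : 0 <= g j < L.
Proof.
  assert (HL : 0 < L) by (apply Rdiv_lt_0_compat; lra).
  assert (Heta : 0 < 1 - s ^ 2) by nra.
  pose proof gamma_limit_fixed_point as Hfix.
  induction j as [|j [Hg0 HgL]]; [simpl; lra|].
  rewrite gamma_seq_S.
  assert (Hsq : g j ^ 2 < L ^ 2) by nra.
  split; nra.
Qed.

Lemma gamma_seq_lt_S j : g j < g (S j).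
Proof.
  induction j as [|j IH]; [simpl; nra|].
  rewrite (gamma_seq_S (S j)), (gamma_seq_S j) at 1.
  destruct (gamma_seq_bounds j) as [Hg0 _].
  assert (Heta : 0 < 1 - s ^ 2) by nra.
  assert (Hsq : g j ^ 2 < g (S j) ^ 2) by nra.
  nra.
Qed.

Lemma gamma_limit_sub_S j : L - g (S j) <= (1 - s) * (L - g j).
Proof.
  destruct (gamma_seq_bounds j) as [Hg0 HgL].
  assert (Hfactor : L - g (S j) = (1 - s ^ 2) * (L + g j) / 2 * (L - g j)).
  { rewrite gamma_seq_S; field; lra. }
  assert (Hrate : (1 - s ^ 2) * (L + g j) / 2 <= 1 - s).
  { assert (HsL : (1 - s ^ 2) * L = 1 - s) by (field; lra).
    nra. }
  rewrite Hfactor; nra.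
Qed.

Lemma gamma_limit_sub_le j : L - g j <= L * (1 - s) ^ j.
Proof.
  induction j as [|j IH]; [simpl; lra|].
  apply Rle_trans with ((1 - s) * (L - g j)); [apply gamma_limit_sub_S|].
  replace (L * (1 - s) ^ S j) with ((1 - s) * (L * (1 - s) ^ j)) by (simpl; ring).
  apply Rmult_le_compat_l; lra.
Qed.

Lemma gamma_seq_is_g_sequence : is_g_sequence g.
Proof.
  split; [reflexivity | split; [simpl; lra|]].
  intros [|k] Hk; [lia|].
  assert (Hpos : 0 < g (S k)).
  { pose proof (gamma_seq_lt_S k); pose proof (gamma_seq_bounds k); lra. }
  destruct (gamma_seq_bounds (S k)) as [_ HL].
  assert (HL1 : L < 1) by (apply Rmult_lt_reg_r with (1 + s); [lra | field_simplify; lra]).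
  pose proof (gamma_seq_lt_S (S k)) as Hinc.
  assert (Hshrink : 0 < s ^ 2 * g (S k) ^ 2)
    by (apply Rmult_lt_0_compat; apply pow_lt; lra).
  rewrite (gamma_seq_S (S k)) in Hinc |- *.
  repeat split; lra.
Qed.

End gamma_seq_convergence.

Theorem mainTheorem13 (eta : R) (Heta : 0 < eta < 1) :
  is_g_sequence (gamma_seq eta) /\
  (let eps := 1 - eta in
   let L := 1 / (1 + sqrt eps) in
   Un_cv (gamma_seq eta) L /\
   forall j : nat, L - gamma_seq eta j <= L * (1 - sqrt eps) ^ j).
Proof.
  cbv zeta; set (s := sqrt (1 - eta)).
  assert (Hs_sq : s * s = 1 - eta) by (apply sqrt_sqrt; lra).
  assert (Hs_pos : 0 < s) by (apply sqrt_lt_R0; lra).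
  assert (Hs : 0 < s < 1) by nra.
  replace eta with (1 - s ^ 2) by nra.
  assert (HL : 0 < 1 / (1 + s)) by (apply Rdiv_lt_0_compat; lra).
  split; [|split].
  - now apply gamma_seq_is_g_sequence.
  - apply (Un_cv_geometric_below _ _ (1 / (1 + s)) (1 - s)); [lra | lra |].
    intro n; destruct (gamma_seq_bounds s Hs n) as [_ HgL].
    pose proof (gamma_limit_sub_le s Hs n); lra.
  - now apply gamma_limit_sub_le.
Qed.
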